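(* Let $G$ be a locally finite graph with a periodic proper vertex-coloring. Then $G$ has a periodic proper vertex-coloring with at most $\Delta(G)+1$ colors.
   Context: Locally finite: every vertex has finite degree. $\Delta(G)$ is the maximum degree of $G$. A vertex-coloring is periodic if the subgroup of automorphisms of $G$ mapping each vertex to a vertex of the same color has finitely many orbits on $V(G)$ (in particular a periodic coloring uses finitely many colors). *)

From Stdlib Require Import List Arith.
Import ListNotations.

Record graph := Graph {
  V : Type;
  adj : V -> V -> Prop;
  adj_sym : forall u v, adj u v -> adj v u;
  adj_irrefl : forall v, ~ adj v v
}.

Definition locally_finite (G : graph) : Prop :=
  forall v : V G, exists s : list (V G), forall u, adj G v u <-> In u s.

Definition deg (G : graph) (v : V G) (n : nat) : Prop :=
  exists s : list (V G), NoDup s /\ (forall u, adj G v u <-> In u s) /\ length s = n.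

(* max_degree G d : Delta(G) = d, i.e. d is the supremum (in nat) of the
   degrees of G (the least upper bound; 0 for the empty graph).
   If degrees are unbounded, no such d exists (Delta(G) = infinity). *)
Definition max_degree (G : graph) (d : nat) : Prop :=
  (forall v n, deg G v n -> n <= d) /\
  (forall d', (forall v n, deg G v n -> n <= d') -> d <= d').

Definition proper_coloring (G : graph) {C : Type} (c : V G -> C) : Prop :=
  forall u v, adj G u v -> c u <> c v.

Definition automorphism (G : graph) (f : V G -> V G) : Prop :=
  (exists g : V G -> V G, (forall x, g (f x) = x) /\ (forall x, f (g x) = x)) /\
  (forall u v, adj G u v <-> adj G (f u) (f v)).

Definition color_preserving_aut (G : graph) {C : Type} (c : V G -> C)
  (f : V G -> V G) : Prop :=
  automorphism G f /\ forall v, c (f v) = c v.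

(* Periodic colouring: the group of colour-preserving automorphisms has finitely
   many orbits on V(G), i.e. there is a finite list of vertices meeting every orbit. *)
Definition periodic_coloring (G : graph) {C : Type} (c : V G -> C) : Prop :=
  exists reps : list (V G), forall v : V G,
    exists r f, In r reps /\ color_preserving_aut G c f /\ f r = v.

(* A periodic colouring takes only the finitely many colours of its orbit
   representatives, so its colour classes can be ranked by natural numbers.
   Recolour greedily, class by class in order of rank: every vertex receives
   the least colour not used by its neighbours of smaller rank.  As a vertex
   has at most Δ(G) neighbours, some colour in {0, ..., Δ(G)} is always free;
   since the original classes are independent sets, the result is proper.
   The construction only refers to adjacency and to the original colour
   classes, so every automorphism preserving the old colouring preserves the
   new one, and the same orbit representatives witness periodicity. *)

From Stdlib Require Import List Arith Lia Classical ClassicalEpsilon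
  FunctionalExtensionality PropExtensionality.

Definition least (P : nat -> Prop) : nat :=
  epsilon (inhabits 0) (fun k => P k /\ forall j, P j -> k <= j).

Lemma least_spec (P : nat -> Prop) :
  (exists k, P k) -> P (least P) /\ forall j, P j -> least P <= j.
Proof.
  intros HP.
  apply (epsilon_spec (inhabits 0) (fun k => P k /\ forall j, P j -> k <= j)).
  destruct (dec_inh_nat_subset_has_unique_least_element P (fun n => classic (P n)) HP)
    as [k [Hk _]].
  now exists k.
Qed.

Lemma least_ext (P Q : nat -> Prop) : (forall k, P k <-> Q k) -> least P = least Q.
Proof.
  intros HPQ. f_equal. extensionality k. apply propositional_extensionality, HPQ.
Qed.

Lemma exists_le_notin (l : list nat) (d : nat) :
  length l <= d -> exists k, k <= d /\ ~ In k l.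
Proof.
  intros Hl. apply NNPP; intros Hnone.
  assert (Hincl : incl (seq 0 (S d)) l).
  { intros k Hk. apply in_seq in Hk. apply NNPP; intros Hk'.
    apply Hnone. exists k; split; [lia | exact Hk']. }
  pose proof (NoDup_incl_length (seq_NoDup (S d) 0) Hincl) as Hlen.
  rewrite length_seq in Hlen. lia.
Qed.

Lemma list_code_inj {A : Type} (cs : list A) :
  exists code : A -> nat, forall x y, In x cs -> In y cs -> code x = code y -> x = y.
Proof.
  exists (fun x => least (fun i => nth_error cs i = Some x)).
  assert (Hcode : forall x, In x cs ->
            nth_error cs (least (fun i => nth_error cs i = Some x)) = Some x).
  { intros x Hx. apply least_spec, In_nth_error, Hx. }
  intros x y Hx Hy E.
  pose proof (Hcode x Hx) as Ex. rewrite E, (Hcode y Hy) in Ex. congruence.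
Qed.

Section BoundedDegree.

Variables (G : graph) (d : nat).
Hypothesis locfin : locally_finite G.
Hypothesis maxdeg : max_degree G d.

Lemma neighbour_list_le (v : V G) :
  exists s, (forall u, adj G v u <-> In u s) /\ length s <= d.
Proof.
  destruct (locfin v) as [s Hs].
  set (s' := nodup (fun x y => excluded_middle_informative (x = y)) s).
  assert (Hs' : forall u, adj G v u <-> In u s').
  { intros u. unfold s'. rewrite nodup_In. apply Hs. }
  exists s'. split; [exact Hs'|].
  apply (proj1 maxdeg v). exists s'. split; [apply NoDup_nodup | split; auto].
Qed.

Lemma free_color_le (col : V G -> nat) (v : V G) :
  exists k, k <= d /\ forall u, adj G v u -> col u <> k.
Proof.
  destruct (neighbour_list_le v) as [s [Hs Hlen]].
  destruct (exists_le_notin (map col s) d) as [k [Hk Hnotin]].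
  { rewrite length_map. exact Hlen. }
  exists k. split; [exact Hk|].
  intros u Hu E. apply Hnotin. rewrite <- E. apply in_map, Hs, Hu.
Qed.

End BoundedDegree.

Section Greedy.

Variables (G : graph) (rank : V G -> nat).

(* [greedy n] has coloured the vertices of rank [< n]; all others still carry [0]. *)
Fixpoint greedy (n : nat) (v : V G) : nat :=
  match n with
  | 0 => 0
  | S n =>
      if rank v =? n
      then least (fun k => forall u, adj G v u -> rank u < n -> greedy n u <> k)
      else greedy n v
  end.

Definition greedy_coloring (v : V G) : nat := greedy (S (rank v)) v.

Lemma greedy_stable (m : nat) (v : V G) : rank v < m -> greedy m v = greedy_coloring v.
Proof.
  induction m as [|m IH]; intros Hv; [lia|].
  simpl. destruct (Nat.eqb_spec (rank v) m) as [<-|Hne].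
  - unfold greedy_coloring. simpl. now rewrite Nat.eqb_refl.
  - apply IH. lia.
Qed.

Lemma greedy_coloring_least (v : V G) :
  greedy_coloring v =
  least (fun k => forall u, adj G v u -> rank u < rank v -> greedy_coloring u <> k).
Proof.
  unfold greedy_coloring at 1. simpl. rewrite Nat.eqb_refl.
  apply least_ext. intros k.
  split; intros H u Hu Hlt; specialize (H u Hu Hlt);
    rewrite (greedy_stable _ _ Hlt) in *; exact H.
Qed.

Lemma greedy_aut_invariant (f : V G -> V G) :
  automorphism G f -> (forall v, rank (f v) = rank v) ->
  forall n v, greedy n (f v) = greedy n v.
Proof.
  intros [[g [_ Hfg]] Hadj] Hrank.
  induction n as [|n IH]; intros v; [reflexivity|].
  simpl. rewrite Hrank, IH. destruct (rank v =? n); [|reflexivity].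
  apply least_ext. intros k. split; intros H u Hu Hlt.
  - rewrite <- IH. apply H; [exact (proj1 (Hadj _ _) Hu) | now rewrite Hrank].
  - rewrite <- (Hfg u) in Hu, Hlt |- *. rewrite IH.
    rewrite Hrank in Hlt. apply H; [exact (proj2 (Hadj _ _) Hu) | exact Hlt].
Qed.

Lemma greedy_coloring_preserved (f : V G -> V G) :
  color_preserving_aut G rank f -> color_preserving_aut G greedy_coloring f.
Proof.
  intros [Hf Hrank]. split; [exact Hf|].
  intros v. unfold greedy_coloring. rewrite Hrank. now apply greedy_aut_invariant.
Qed.

Variable d : nat.
Hypothesis locfin : locally_finite G.
Hypothesis maxdeg : max_degree G d.

Lemma greedy_coloring_spec (v : V G) :
  greedy_coloring v <= d /\
  forall u, adj G v u -> rank u < rank v -> greedy_coloring u <> greedy_coloring v.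
Proof.
  destruct (free_color_le G d locfin maxdeg greedy_coloring v) as [k [Hk Hfree]].
  destruct (least_spec
              (fun k => forall u, adj G v u -> rank u < rank v -> greedy_coloring u <> k))
    as [Hleast Hmin]; [exists k; auto|].
  rewrite <- greedy_coloring_least in Hleast, Hmin.
  split; [specialize (Hmin k (fun u Hu _ => Hfree u Hu)); lia | exact Hleast].
Qed.

Lemma greedy_coloring_proper : proper_coloring G rank -> proper_coloring G greedy_coloring.
Proof.
  intros Hrank u v Huv.
  destruct (proj1 (Nat.lt_gt_cases (rank u) (rank v)) (Hrank u v Huv)) as [Hlt|Hgt].
  - apply (proj2 (greedy_coloring_spec v)); [apply adj_sym, Huv | exact Hlt].
  - intros E. symmetry in E. revert E.
    apply (proj2 (greedy_coloring_spec u)); [exact Huv | exact Hgt].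
Qed.

End Greedy.

Lemma periodic_coloring_nat_recoding (G : graph) (C : Type) (c : V G -> C) :
  periodic_coloring G c -> exists rank : V G -> nat, forall u v, rank u = rank v <-> c u = c v.
Proof.
  intros [reps Hreps].
  assert (Hrange : forall v, In (c v) (map c reps)).
  { intros v. destruct (Hreps v) as [r [f [Hr [[_ Hfc] <-]]]].
    rewrite Hfc. apply in_map, Hr. }
  destruct (list_code_inj (map c reps)) as [code Hcode].
  exists (fun v => code (c v)). intros u v. split.
  - apply Hcode; apply Hrange.
  - intros E. now rewrite E.
Qed.

Lemma periodic_coloring_coarser (G : graph) (C C' : Type) (c : V G -> C) (c' : V G -> C') :
  periodic_coloring G c ->
  (forall f, color_preserving_aut G c f -> color_preserving_aut G c' f) ->
  periodic_coloring G c'.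
Proof.
  intros [reps Hreps] Hc'. exists reps. intros v.
  destruct (Hreps v) as [r [f [Hr [Hf Hfr]]]].
  exists r, f. split; [exact Hr | split; [apply Hc', Hf | exact Hfr]].
Qed.

Theorem lemma2p7 (G : graph) (C : Type) (c : V G -> C) :
  locally_finite G ->
  proper_coloring G c ->
  periodic_coloring G c ->
  forall d : nat, max_degree G d ->
  exists c' : V G -> nat,
    proper_coloring G c' /\ periodic_coloring G c' /\ (forall v, c' v <= d).
Proof.
  intros locfin proper periodic d maxdeg.
  destruct (periodic_coloring_nat_recoding G C c periodic) as [rank Hrank].
  exists (greedy_coloring G rank). split; [|split].
  - apply (greedy_coloring_proper G rank d locfin maxdeg).
    intros u v Huv E. apply (proper u v Huv), Hrank, E.
  - apply (periodic_coloring_coarser G C nat c _ periodic).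
    intros f [Hf Hfc]. apply greedy_coloring_preserved.
    split; [exact Hf|]. intros v. apply Hrank, Hfc.
  - intros v. apply (greedy_coloring_spec G rank d locfin maxdeg v).
Qed.
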